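(* Let $k$ be a field of characteristic $p>0$ and $A$ an infinite-dimensional $k$-vector space. For every $r\ge0$, $S_{\le r}A\neq\bigoplus_{0\le i\le r}S^iA$.
   Context: $SA=\bigoplus_{m\ge0}S^mA$ is the symmetric algebra of $A$ ($S^0A=k$, $S^mA$ the $m$-th symmetric power, with pure symmetric tensors $a_1\otimes_s\dots\otimes_s a_m$). The linear map $\partial\colon SA\to SA\otimes A$ is given by $\partial(\lambda)=0$ for $\lambda\in S^0A$ and $\partial(a_1\otimes_s\dots\otimes_s a_m)=\sum_{i=1}^m(a_1\otimes_s\dots\otimes_s a_{i-1}\otimes_s a_{i+1}\otimes_s\dots\otimes_s a_m)\otimes a_i$. Iterates: $\partial^0=1_{SA}$ and $\partial^{r+1}:=\partial;(\partial^r\otimes 1_A)\colon SA\to SA\otimes A^{\otimes(r+1)}$. Define $S_{\le r}A:=\ker(\partial^{r+1})\subseteq SA$. *)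

From HB Require Import structures.
From mathcomp Require Import all_boot all_order all_algebra.
From mathcomp Require Import finmap.
From mathcomp.multinomials Require Import monalg.

Set Implicit Arguments.
Unset Strict Implicit.
Unset Printing Implicit Defensive.

Import GRing.Theory.
Local Open Scope ring_scope.

(* The k-vector space A is modelled as the free k-vector space on a basis
   I (every vector space has a basis); A is infinite-dimensional iff I is
   infinite.  Then:
   - S^m A has basis the commutative monomials of degree m in the basis
     vectors x_i (i : I), so  SA = {malg k[{cmonom I}]}  (polynomial ring);
   - SA (x) A^{(x) n} has basis (monomial, n-tuple of basis indices), so
     SA (x) A^{(x) n} = {malg k[{cmonom I} * n.-tuple I]}.                *)

Section SymAlg.
Variables (k : fieldType) (I : choiceType).

Definition SA := {malg k[{cmonom I}]}.
Definition SAT (n : nat) := {malg k[({cmonom I} * n.-tuple I)%type]}.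

Definition mon_of_seq (s : seq I) : {cmonom I} :=
  \big[mmul/mone]_(i <- s) ucm i.

Definition seq_of_mon (m : {cmonom I}) : seq I :=
  flatten [seq nseq (m i) i | i <- finsupp m].

(* paper's formula for d on a pure tensor a_1 (x)_s ... (x)_s a_m (a_j = x_{s_j}):
   sum_j (a_1 ... a_{j-1} a_{j+1} ... a_m) (x) a_j *)
Definition dpure (s : seq I) : SAT 1 :=
  \sum_(j < size s)
     << (mon_of_seq (take j s ++ drop j.+1 s), [tuple tnth (in_tuple s) j]) >>.

Definition dS (f : SA) : SAT 1 :=
  \sum_(m <- msupp f) f@_m *: dpure (seq_of_mon m).

Definition tens_right n (g : SAT n) (i : I) : SAT n.+1 :=
  \sum_(kt <- msupp g) << g@_kt *g (kt.1, [tuple of rcons kt.2 i]) >>.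

(* F (x) 1_A : SA (x) A -> SA (x) A^{(x) n+1}, for a map F : SA -> SA (x) A^{(x) n} *)
Definition tens_id n (F : SA -> SAT n) (g : SAT 1) : SAT n.+1 :=
  \sum_(kt <- msupp g) g@_kt *: tens_right (F << kt.1 >>) (thead kt.2).

(* iterates: d^0 = 1_SA (under SA = SA (x) A^{(x)0}),  d^{r+1} = d ; (d^r (x) 1_A) *)
Fixpoint dpow (n : nat) : SA -> SAT n :=
  match n with
  | 0 => fun f => \sum_(m <- msupp f) << f@_m *g (m, [tuple]) >>
  | r.+1 => fun f => tens_id (dpow r) (dS f)
  end.

Definition S_le (r : nat) : pred SA := fun f => dpow r.+1 f == 0.

Definition S_sum_le (r : nat) : pred SA :=
  fun f => all (fun m => mdeg m <= r)%N (msupp f).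

End SymAlg.

From HB Require Import structures.
From mathcomp Require Import all_boot all_order all_algebra.
From mathcomp Require Import finmap.
From mathcomp.multinomials Require Import monalg.
From mathcomp Require Import zify.

Set Implicit Arguments.
Unset Strict Implicit.
Unset Printing Implicit Defensive.
Import GRing.Theory.
Local Open Scope ring_scope.

(* In characteristic p the power x^n of a basis vector, n = p^(r+1), satisfies
   d(x^n) = n x^(n-1) (x) x = 0.  So x^n lies in ker d, hence in
   ker d^(r+1) = S_{<=r} A, although its degree n exceeds r.  Only one basis
   vector is needed: the argument works as soon as A is nonzero. *)

Section SymmetricTensors.
Variables (k : fieldType) (I : choiceType).

Lemma mon_of_seqE (s : seq I) (j : I) : mon_of_seq s j = count_mem j s.
Proof.
elim: s => [|i s IHs]; first by rewrite /mon_of_seq big_nil cm1.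
by rewrite /mon_of_seq big_cons cmM cmU -/(mon_of_seq s) IHs.
Qed.

Lemma mdeg_mon_of_seq (s : seq I) : mdeg (mon_of_seq s) = size s.
Proof.
rewrite /mon_of_seq mdeg_prod -sum1_size.
by apply: eq_bigr => i _; rewrite mdegU.
Qed.

Lemma count_seq_of_mon (m : {cmonom I}) (j : I) :
  count_mem j (seq_of_mon m) = m j.
Proof.
rewrite /seq_of_mon count_flatten -map_comp sumnE big_map.
under eq_bigr => i _ do rewrite /= count_nseq.
have [jm | jNm] := boolP (j \in finsupp m).
  rewrite (big_fsetD1 j jm) /= eqxx mul1n big1_fset ?addn0 // => i.
  by rewrite !inE => /andP [/negbTE -> _].
rewrite big1_fset => [|i im _]; last first.
  have ij : i != j by apply: contraNneq jNm => <-.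
  by rewrite /= (negPf ij).
by apply/esym/eqP; rewrite cmE_eq0.
Qed.

Lemma perm_seq_of_mon (s : seq I) : perm_eq (seq_of_mon (mon_of_seq s)) s.
Proof. by apply/allP => j _; rewrite /= count_seq_of_mon mon_of_seqE. Qed.

Lemma seq_of_mon_nseq (n : nat) (i : I) :
  seq_of_mon (mon_of_seq (nseq n i)) = nseq n i.
Proof.
have perm_s := perm_seq_of_mon (nseq n i).
have /all_pred1P -> : all (pred1 i) (seq_of_mon (mon_of_seq (nseq n i))).
  by rewrite (perm_all _ perm_s) all_pred1_nseq.
by rewrite (perm_size perm_s) size_nseq.
Qed.

Lemma dS_malgU (m : {cmonom I}) : dS << m >> = dpure k (seq_of_mon m).
Proof. by rewrite /dS msuppU1 big_seq_fset1 mcoeffUU scale1r. Qed.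

Lemma dpure_nseq (n : nat) (i : I) :
  dpure k (nseq n i) = << (mon_of_seq (nseq n.-1 i), [tuple i]) >> *+ n.
Proof.
rewrite /dpure (eq_bigr (fun=> << (mon_of_seq (nseq n.-1 i), [tuple i]) >>)).
  by rewrite sumr_const card_ord size_nseq.
move=> j _; have lt_jn : (j < n)%N by case: j => j /=; rewrite size_nseq.
congr << (mon_of_seq _, _) >>.
  rewrite take_nseq ?(ltnW lt_jn) // drop_nseq -nseqD.
  by congr nseq; lia.
by apply: val_inj; rewrite /= (tnth_nth i) /= nth_nseq lt_jn.
Qed.

Lemma dS_mon_nseq (n : nat) (i : I) :
  dS << mon_of_seq (nseq n i) >> =
    << (mon_of_seq (nseq n.-1 i), [tuple i]) >> *+ n :> SAT k I 1.
Proof. by rewrite dS_malgU seq_of_mon_nseq dpure_nseq. Qed.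

Lemma tens_id0 (n : nat) (F : SA k I -> SAT k I n) : tens_id F 0 = 0.
Proof. by rewrite /tens_id msupp0 big_seq_fset0. Qed.

Lemma dS_eq0_S_le (r : nat) (f : SA k I) : dS f = 0 -> f \in S_le r.
Proof. by rewrite unfold_in /S_le /= => ->; rewrite tens_id0. Qed.

Lemma S_sum_leU (r : nat) (m : {cmonom I}) :
  (<< m >> : SA k I) \in S_sum_le r = (mdeg m <= r)%N.
Proof.
rewrite unfold_in /S_sum_le msuppU1.
by apply/allP/idP => [/(_ m (fset11 m)) | le_mr _ /fset1P ->].
Qed.

End SymmetricTensors.

Theorem proposition7p9 (k : fieldType) (p : nat) (hp : (p \in [pchar k])%R)
    (I : choiceType) (infI : forall s : seq I, exists i : I, i \notin s)
    (r : nat) :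
  ~ (@S_le k I r =i @S_sum_le k I r).
Proof.
move=> S_leE; have [i _] := infI [::].
set n := (p ^ r.+1)%N.
have n_gt_r : (r < n)%N by apply/ltnW/ltn_expl/prime_gt1/(pcharf_prime hp).
have n_eq0 : n%:R = 0 :> k by rewrite natrX (pcharf0 hp) expr0n.
have d_pow : dS << mon_of_seq (nseq n i) >> = 0 :> SAT k I 1.
  by rewrite dS_mon_nseq -scaler_nat n_eq0 scale0r.
have := dS_eq0_S_le r d_pow.
by rewrite S_leE S_sum_leU mdeg_mon_of_seq size_nseq leqNgt n_gt_r.
Qed.
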